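(* Let $(\bar x,\bar r)\in\mathbb{R}^n\times\mathbb{R}^2_+$ with $\bar r=\mathbb{Q}(\bar x)$ be a local optimal solution of problem (P2), and suppose $(\bar x,\bar\xi)\in\mathcal{M}(\bar r)$. Then $(\bar x,\bar\lambda)$ with $\bar\lambda:=\bar\xi$ is a local optimal solution of problem (P1).
   Context: Fix $\Psi\in\mathbb{R}^{d\times n}$, linear difference operators $D_1,\dots,D_n$ (matrices with $n$ columns), and $\|x\|_{\mathrm{TV}}:=\sum_{i=1}^n\|D_ix\|_1$. Training data $\Phi_{\mathrm{tr}}\in\mathbb{R}^{m_1\times n}$, $b_{\mathrm{tr}}\in\mathbb{R}^{m_1}$ and validation data $\Phi_{\mathrm{val}}\in\mathbb{R}^{m_2\times n}$, $b_{\mathrm{val}}\in\mathbb{R}^{m_2}$ are given. Let $F(x):=\frac12\|\Phi_{\mathrm{val}}x-b_{\mathrm{val}}\|_2^2$. For $\lambda\in\mathbb{R}^2_+$, $\mathbb{S}_p(\lambda)$ is the set of minimizers over $x\in\mathbb{R}^n$ of $\frac12\|\Phi_{\mathrm{tr}}x-b_{\mathrm{tr}}\|_2^2+\lambda_1\|\Psi x\|_1+\lambda_2\|x\|_{\mathrm{TV}}$; for $r\in\mathbb{R}^2_+$, $\mathbb{S}_c(r)$ is the set of minimizers over $x\in\mathbb{R}^n$ of $\frac12\|\Phi_{\mathrm{tr}}x-b_{\mathrm{tr}}\|_2^2$ subject to $\|\Psi x\|_1\le r_1$, $\|x\|_{\mathrm{TV}}\le r_2$. Problem (P1): minimize $F(x)$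 over $(x,\lambda)\in\mathbb{R}^n\times\mathbb{R}^2_+$ subject to $x\in\mathbb{S}_p(\lambda)$. Problem (P2): minimize $F(x)$ over $(x,r)\in\mathbb{R}^n\times\mathbb{R}^2_+$ subject to $x\in\mathbb{S}_c(r)$. A feasible point $(\bar x,\bar y)$ of either problem is a local optimal solution if there is $\varepsilon>0$ such that $F(\bar x)\le F(x)$ for every feasible $(x,y)$ with $\|(x,y)-(\bar x,\bar y)\|<\varepsilon$. $\mathbb{Q}(x):=(\|\Psi x\|_1,\|x\|_{\mathrm{TV}})\in\mathbb{R}^2_+$. For $r\in\mathbb{R}^2_+$, $\mathcal{M}(r):=\{(x,\xi)\in\mathbb{R}^n\times\mathbb{R}^2_+ : 0\in\Phi_{\mathrm{tr}}^\top(\Phi_{\mathrm{tr}}x-b_{\mathrm{tr}})+\xi_1\Psi^\top\partial\|\cdot\|_1(\Psi x)+\xi_2\sum_{i=1}^n D_i^\top\partial\|\cdot\|_1(D_ix),\ \xi_1(\|\Psi x\|_1-r_1)=0,\ \xi_2(\|x\|_{\mathrm{TV}}-r_2)=0\}$, where $\partial$ is the convex subdifferential. *)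

From mathcomp Require Import all_boot all_order all_algebra.
From mathcomp Require Import reals.
Set Implicit Arguments. Unset Strict Implicit. Unset Printing Implicit Defensive.
Import Order.TTheory GRing.Theory Num.Theory.
Local Open Scope ring_scope.

Section Bilevel.
Variable R : realType.

Definition norm1 {k : nat} (v : 'cV[R]_k) : R := \sum_(i < k) `|v i 0|.
Definition sqnorm2 {k : nat} (v : 'cV[R]_k) : R := \sum_(i < k) (v i 0) ^+ 2.
Definition inner {k : nat} (u v : 'cV[R]_k) : R := \sum_(i < k) u i 0 * v i 0.

Definition subdiff {k : nat} (f : 'cV[R]_k -> R) (z : 'cV[R]_k) : 'cV[R]_k -> Prop :=
  fun v => forall w, f z + inner v (w - z) <= f w.

Variables (n d m1 m2 : nat) (p : 'I_n -> nat).
Variables (Psi : 'M[R]_(d, n)) (D : forall i : 'I_n, 'M[R]_(p i, n)).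
Variables (Phitr : 'M[R]_(m1, n)) (btr : 'cV[R]_m1).
Variables (Phival : 'M[R]_(m2, n)) (bval : 'cV[R]_m2).

Definition TV (x : 'cV[R]_n) : R := \sum_(i < n) norm1 (D i *m x).

Definition Fval (x : 'cV[R]_n) : R := 2^-1 * sqnorm2 (Phival *m x - bval).
Definition Ltr (x : 'cV[R]_n) : R := 2^-1 * sqnorm2 (Phitr *m x - btr).

Definition nonneg2 (y : R * R) : Prop := 0 <= y.1 /\ 0 <= y.2.

Definition Sp (lam : R * R) (x : 'cV[R]_n) : Prop :=
  forall z : 'cV[R]_n,
    Ltr x + lam.1 * norm1 (Psi *m x) + lam.2 * TV x
    <= Ltr z + lam.1 * norm1 (Psi *m z) + lam.2 * TV z.

Definition Sc (r : R * R) (x : 'cV[R]_n) : Prop :=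
  [/\ norm1 (Psi *m x) <= r.1, TV x <= r.2 &
      forall z : 'cV[R]_n, norm1 (Psi *m z) <= r.1 -> TV z <= r.2 -> Ltr x <= Ltr z].

Definition feasP1 (x : 'cV[R]_n) (lam : R * R) : Prop := nonneg2 lam /\ Sp lam x.
Definition feasP2 (x : 'cV[R]_n) (r : R * R) : Prop := nonneg2 r /\ Sc r x.

Definition dist (x : 'cV[R]_n) (y : R * R) (x' : 'cV[R]_n) (y' : R * R) : R :=
  Num.sqrt (sqnorm2 (x - x') + (y.1 - y'.1) ^+ 2 + (y.2 - y'.2) ^+ 2).

Definition local_opt (feas : 'cV[R]_n -> R * R -> Prop) (xb : 'cV[R]_n) (yb : R * R) : Prop :=
  feas xb yb /\
  exists2 eps : R, 0 < eps &
    forall x y, feas x y -> dist x y xb yb < eps -> Fval xb <= Fval x.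

Definition localP1 := local_opt feasP1.
Definition localP2 := local_opt feasP2.

Definition Qmap (x : 'cV[R]_n) : R * R := (norm1 (Psi *m x), TV x).

Definition Mset (r : R * R) (x : 'cV[R]_n) (xi : R * R) : Prop :=
  [/\ nonneg2 xi,
      exists (v : 'cV[R]_d) (w : forall i : 'I_n, 'cV[R]_(p i)),
        [/\ subdiff norm1 (Psi *m x) v,
            forall i, subdiff norm1 (D i *m x) (w i) &
            Phitr^T *m (Phitr *m x - btr) + xi.1 *: (Psi^T *m v)
              + xi.2 *: (\sum_(i < n) (D i)^T *m w i) = 0],
      xi.1 * (norm1 (Psi *m x) - r.1) = 0 &
      xi.2 * (TV x - r.2) = 0].

End Bilevel.

From mathcomp Require Import all_boot all_order all_algebra.
From mathcomp Require Import reals.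
From mathcomp Require Import lra.
Import Order.TTheory GRing.Theory Num.Theory.
Set Implicit Arguments. Unset Strict Implicit.
Local Open Scope ring_scope.

(* The multipliers of M(r) certify, through the convex subgradient inequality,
   that x̄ minimizes the penalized training loss with weights ξ̄, so (x̄, ξ̄) is
   feasible for (P1).  Conversely every x ∈ S_p(λ) solves the constrained
   problem with radii Q(x), so (x, Q(x)) is feasible for (P2).  Since Q is
   Lipschitz, (x, Q(x)) lies close to (x̄, Q(x̄)) = (x̄, r̄) whenever (x, λ) lies
   close to (x̄, ξ̄), and local optimality transfers. *)

Section Subgradients.
Variable R : realType.

Lemma innerE k (u v : 'cV[R]_k) : inner u v = (u^T *m v) 0 0.
Proof. by rewrite /inner mxE; apply: eq_bigr => i _; rewrite mxE. Qed.

Lemma inner_mulmxr k l (A : 'M[R]_(k, l)) u h : inner u (A *m h) = inner (A^T *m u) h.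
Proof. by rewrite !innerE trmx_mul trmxK mulmxA. Qed.

Lemma innerDl k (u v h : 'cV[R]_k) : inner (u + v) h = inner u h + inner v h.
Proof. by rewrite /inner -big_split; apply: eq_bigr => i _; rewrite mxE mulrDl. Qed.

Lemma innerZl k a (u h : 'cV[R]_k) : inner (a *: u) h = a * inner u h.
Proof. by rewrite /inner mulr_sumr; apply: eq_bigr => i _; rewrite mxE mulrA. Qed.

Lemma inner0l k (h : 'cV[R]_k) : inner 0 h = 0.
Proof. by rewrite /inner big1 // => i _; rewrite mxE mul0r. Qed.

Lemma inner_suml k (I : finType) (f : I -> 'cV[R]_k) h :
  inner (\sum_i f i) h = \sum_i inner (f i) h.
Proof.
by rewrite /inner exchange_big /=; apply: eq_bigr => j _; rewrite summxE mulr_suml.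
Qed.

Lemma sqnorm2_ge0 k (v : 'cV[R]_k) : 0 <= sqnorm2 v.
Proof. by apply: sumr_ge0 => i _; rewrite sqr_ge0. Qed.

Lemma sqnorm2D k (a b : 'cV[R]_k) :
  sqnorm2 (a + b) = sqnorm2 a + 2 * inner a b + sqnorm2 b.
Proof.
rewrite /sqnorm2 /inner mulr_sumr -!big_split /=; apply: eq_bigr => i _.
by rewrite mxE sqrrD mulr_natl.
Qed.

Lemma norm1_ge0 k (v : 'cV[R]_k) : 0 <= norm1 v.
Proof. by apply: sumr_ge0. Qed.

Variable k : nat.
Implicit Types (f g : 'cV[R]_k -> R) (x z u v : 'cV[R]_k).

Lemma subdiff0_min f x : subdiff f x 0 -> forall z, f x <= f z.
Proof. by move=> f0 z; have := f0 z; rewrite inner0l addr0. Qed.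

Lemma subdiffD f g x u v : subdiff f x u -> subdiff g x v ->
  subdiff (fun z => f z + g z) x (u + v).
Proof. by move=> fu gv z; have := fu z; have := gv z; rewrite innerDl; lra. Qed.

Lemma subdiffZ a f x u : 0 <= a -> subdiff f x u ->
  subdiff (fun z => a * f z) x (a *: u).
Proof. by move=> a0 fu z; rewrite innerZl -mulrDr ler_wpM2l. Qed.

Lemma subdiff_sum (I : finType) (f : I -> 'cV[R]_k -> R) x (u : I -> 'cV[R]_k) :
  (forall i, subdiff (f i) x (u i)) -> subdiff (fun z => \sum_i f i z) x (\sum_i u i).
Proof. by move=> fu z /=; rewrite inner_suml -big_split; apply: ler_sum => i _; apply: fu. Qed.

Lemma subdiff_mulmx l (A : 'M[R]_(l, k)) (f : 'cV[R]_l -> R) x (v : 'cV[R]_l) :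
  subdiff f (A *m x) v -> subdiff (fun z => f (A *m z)) x (A^T *m v).
Proof. by move=> fv z; rewrite -inner_mulmxr mulmxBr; apply: fv. Qed.

Lemma subdiff_halfsqdist l (A : 'M[R]_(l, k)) b x :
  subdiff (fun z => 2^-1 * sqnorm2 (A *m z - b)) x (A^T *m (A *m x - b)).
Proof.
move=> z /=; rewrite -inner_mulmxr.
have -> : A *m z - b = (A *m x - b) + A *m (z - x).
  by rewrite mulmxBr [RHS]addrC addrA subrK.
by rewrite [in leRHS]sqnorm2D; have := sqnorm2_ge0 (A *m (z - x)); lra.
Qed.

End Subgradients.

Section Lipschitz.
Variable R : realType.

Definition mxnorm1 k l (A : 'M[R]_(k, l)) : R := \sum_i \sum_j `|A i j|.

Lemma mxnorm1_ge0 k l (A : 'M[R]_(k, l)) : 0 <= mxnorm1 A.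
Proof. by apply: sumr_ge0 => i _; apply: sumr_ge0. Qed.

Lemma entry_le_norm2 k (y : 'cV[R]_k) j : `|y j 0| <= Num.sqrt (sqnorm2 y).
Proof.
rewrite -sqrtr_sqr ler_sqrt ?sqnorm2_ge0 // /sqnorm2 (bigD1 j) //= lerDl.
by apply: sumr_ge0 => i _; rewrite sqr_ge0.
Qed.

Lemma norm1_mulmx_le k l (A : 'M[R]_(k, l)) y :
  norm1 (A *m y) <= mxnorm1 A * Num.sqrt (sqnorm2 y).
Proof.
rewrite /norm1 /mxnorm1 mulr_suml; apply: ler_sum => i _.
rewrite mxE mulr_suml; apply: le_trans (ler_norm_sum _ _ _) _; apply: ler_sum => j _.
by rewrite normrM ler_wpM2l // entry_le_norm2.
Qed.

Lemma norm1_mulmx_lipschitz k l (A : 'M[R]_(k, l)) x y :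
  `|norm1 (A *m x) - norm1 (A *m y)| <= mxnorm1 A * Num.sqrt (sqnorm2 (x - y)).
Proof.
apply: le_trans (norm1_mulmx_le A (x - y)).
rewrite /norm1 -sumrB; apply: le_trans (ler_norm_sum _ _ _) _; apply: ler_sum => i _.
by rewrite mulmxBr !mxE ler_dist_dist.
Qed.

Lemma sqrt_sum3_le (s a b u v : R) : 0 <= s -> `|a| <= u -> `|b| <= v ->
  Num.sqrt (s ^+ 2 + a ^+ 2 + b ^+ 2) <= s + u + v.
Proof.
move=> s0 au bv; have a0 := normr_ge0 a; have b0 := normr_ge0 b.
have u0 : 0 <= u by apply: le_trans au.
have v0 : 0 <= v by apply: le_trans bv.
rewrite -[leRHS]ger0_norm ?addr_ge0 // -sqrtr_sqr ler_sqrt ?sqr_ge0 //.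
rewrite -(real_normK (num_real a)) -(real_normK (num_real b)); nra.
Qed.

End Lipschitz.

Section Bilevel.
Variables (R : realType) (n d m1 : nat) (p : 'I_n -> nat).
Variables (Psi : 'M[R]_(d, n)) (D : forall i : 'I_n, 'M[R]_(p i, n)).
Variables (Phitr : 'M[R]_(m1, n)) (btr : 'cV[R]_m1).

Lemma Sp_of_Mset r x xi : Mset Psi D Phitr btr r x xi -> Sp Psi D Phitr btr xi x.
Proof.
case=> [[xi1 xi2] [v [w [sv sw grad0]]] _ _].
apply: subdiff0_min; rewrite -grad0.
apply: subdiffD; last by apply: subdiffZ => //; apply: subdiff_sum => i;
  exact: subdiff_mulmx.
apply: subdiffD; first exact: subdiff_halfsqdist.
by apply: subdiffZ => //; exact: subdiff_mulmx.
Qed.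

Lemma Qmap_nonneg x : nonneg2 (Qmap Psi D x).
Proof. by split; [exact: norm1_ge0 | apply: sumr_ge0 => i _; exact: norm1_ge0]. Qed.

Lemma Sc_Qmap_of_Sp lam x : nonneg2 lam -> Sp Psi D Phitr btr lam x ->
  Sc Psi D Phitr btr (Qmap Psi D x) x.
Proof.
case=> l1 l2 xmin; split => //= z h1 h2.
by have := xmin z; have := ler_wpM2l l1 h1; have := ler_wpM2l l2 h2; lra.
Qed.

Definition Qlip : R := mxnorm1 Psi + \sum_i mxnorm1 (D i).

Lemma Qlip_ge0 : 0 <= Qlip.
Proof. by rewrite addr_ge0 ?mxnorm1_ge0 // sumr_ge0 // => i _; apply: mxnorm1_ge0. Qed.

Lemma TV_lipschitz x y :
  `|TV D x - TV D y| <= (\sum_i mxnorm1 (D i)) * Num.sqrt (sqnorm2 (x - y)).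
Proof.
rewrite /TV -sumrB mulr_suml; apply: le_trans (ler_norm_sum _ _ _) _.
by apply: ler_sum => i _; exact: norm1_mulmx_lipschitz.
Qed.

Lemma norm2_le_dist (x xb : 'cV[R]_n) lam xi :
  Num.sqrt (sqnorm2 (x - xb)) <= dist x lam xb xi.
Proof.
by rewrite ler_sqrt ?addr_ge0 ?sqnorm2_ge0 ?sqr_ge0 // -!addrA lerDl addr_ge0 ?sqr_ge0.
Qed.

Lemma dist_Qmap_le x lam xb xi :
  dist x (Qmap Psi D x) xb (Qmap Psi D xb) <= (1 + Qlip) * dist x lam xb xi.
Proof.
set s := Num.sqrt (sqnorm2 (x - xb)).
have s0 : 0 <= s by apply: sqrtr_ge0.
apply: le_trans (_ : (1 + Qlip) * s <= _); last first.
  by apply: ler_wpM2l; [rewrite addr_ge0 ?Qlip_ge0 | exact: norm2_le_dist].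
rewrite /dist -(sqr_sqrtr (sqnorm2_ge0 (x - xb))) -/s /= mulrDl mul1r mulrDl addrA.
apply: sqrt_sum3_le => //; [exact: norm1_mulmx_lipschitz | exact: TV_lipschitz].
Qed.

End Bilevel.

Theorem mainTheorem4 (R : realType) (n d m1 m2 : nat) (p : 'I_n -> nat)
  (Psi : 'M[R]_(d, n)) (D : forall i : 'I_n, 'M[R]_(p i, n))
  (Phitr : 'M[R]_(m1, n)) (btr : 'cV[R]_m1)
  (Phival : 'M[R]_(m2, n)) (bval : 'cV[R]_m2)
  (xb : 'cV[R]_n) (rb xib : R * R) :
  rb = Qmap Psi D xb ->
  localP2 Psi D Phitr btr Phival bval xb rb ->
  Mset Psi D Phitr btr rb xb xib ->
  localP1 Psi D Phitr btr Phival bval xb xib.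
Proof.
move=> -> [_ [eps eps0 P2opt]] xiM.
have xi0 : nonneg2 xib by case: xiM.
split; first by split; last exact: Sp_of_Mset xiM.
have K0 : 0 < 1 + Qlip Psi D by rewrite ltr_pwDl ?Qlip_ge0.
exists (eps / (1 + Qlip Psi D)) => [|x lam [lam0 xSp] near]; first by rewrite divr_gt0.
apply: (P2opt x (Qmap Psi D x)).
  by split; [exact: Qmap_nonneg | exact: Sc_Qmap_of_Sp lam0 xSp].
apply: le_lt_trans (dist_Qmap_le Psi D x lam xb xib) _.
by rewrite mulrC -ltr_pdivlMr.
Qed.
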